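(* Let $(\Omega,\mathcal F)$ be a measurable space with $\Sigma\neq\emptyset$, $\nu$ a finite measure on it, and $\mu$ a finite measure with $\mu\ll\nu$. Let $F_\mu(y)=\nu(\{\omega:\frac{d\mu}{d\nu}(\omega)\le y\})$ ($y\ge0$), $v_\mu(A)=\int_0^\infty\min(\nu(\Omega)-F_\mu(z),\nu(A))\,dz$, $I_{\mu,y}=\{\omega:\frac{d\mu}{d\nu}(\omega)>y\}$, and $\mathcal I_\mu=\{\emptyset,\Omega\}\cup\{I_{\mu,y}\mid y\ge0\}$. Assume $\mathcal I_\mu\in\Sigma$ and that the image of $F_\mu$ contains the image of $\nu$ (i.e. $\{\nu(A):A\in\mathcal F\}\subset\{F_\mu(y):y\ge0\}$). Then for every non-negative measurable $f:\Omega\to[0,\infty)$ that is comonotone with $\frac{d\mu}{d\nu}$, $$v_\mu(f)=\int_\Omega f\,d\mu=\sup\Big\{\int_\Omega f\,d\mu'\ \Big|\ \mu'\text{ a finite measure},\ \mu'\ll\nu,\ F_{\mu'}=F_\mu\Big\},$$ where $v_\mu(f)=\int_0^\infty v_\mu(\{\omega:f(\omega)>z\})\,dz$.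
   Context: $\Sigma$ denotes the set of all classes $\mathcal I\subset\mathcal F$ that are chains (totally ordered by inclusion), contain $\emptyset$ and $\Omega$, and generate $\mathcal F$ as a $\sigma$-algebra. $\frac{d\mu}{d\nu}$ is the non-negative Radon–Nikodym derivative; $F_{\mu'}$ is defined from $\mu'$ like $F_\mu$. Two functions $f,g:\Omega\to\mathbb R$ are comonotone if the family $\{\{f\le z\}: z\in\mathbb R\}\cup\{\{g\le z\}:z\in\mathbb R\}$ is a chain under inclusion. *)

From HB Require Import structures.
From mathcomp Require Import all_boot all_order all_algebra.
From mathcomp Require Import all_classical all_reals all_analysis.
Set Implicit Arguments. Unset Strict Implicit. Unset Printing Implicit Defensive.
Import Order.TTheory GRing.Theory Num.Theory.
Local Open Scope classical_set_scope.
Local Open Scope ring_scope.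

Definition is_chain (T : Type) (C : set (set T)) : Prop :=
  forall A B, C A -> C B -> A `<=` B \/ B `<=` A.

Definition Sigma_class d (T : measurableType d) : set (set (set T)) :=
  [set I | I `<=` measurable /\ is_chain I /\ I set0 /\ I setT /\
           <<s I >> = @measurable d T].

Definition is_density d (T : measurableType d) (R : realType)
  (mu nu : set T -> \bar R) (g : T -> R) : Prop :=
  measurable_fun setT g /\ (forall x, 0 <= g x) /\
  forall A, measurable A -> mu A = (\int[nu]_(x in A) (g x)%:E)%E.

Definition Fdist d (T : measurableType d) (R : realType)
  (nu : set T -> \bar R) (g : T -> R) (y : R) : \bar R :=
  nu [set x | g x <= y].

Definition Iset d (T : measurableType d) (R : realType) (g : T -> R) (y : R)
  : set T := [set x | y < g x].

Definition Iclass d (T : measurableType d) (R : realType) (g : T -> R)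
  : set (set T) :=
  [set A | A = set0 \/ A = setT \/ exists2 y, 0 <= y & A = Iset g y].

Definition vmu_set d (T : measurableType d) (R : realType)
  (nu : set T -> \bar R) (g : T -> R) (A : set T) : \bar R :=
  (\int[@lebesgue_measure R]_(z in [set z : R | (0 <= z)%R])
      Order.min (nu setT - Fdist nu g z) (nu A))%E.

Definition vmu_fun d (T : measurableType d) (R : realType)
  (nu : set T -> \bar R) (g : T -> R) (f : T -> R) : \bar R :=
  (\int[@lebesgue_measure R]_(z in [set z : R | (0 <= z)%R])
      vmu_set nu g [set x | (z < f x)%R])%E.

Definition comonotone (T : Type) (R : realType) (f g : T -> R) : Prop :=
  is_chain [set A | exists z : R,
                      A = [set x | f x <= z] \/ A = [set x | g x <= z]].

(** By the layer-cake formula, [\int f dmu = \int_0^oo mu {f > z} dz], and for a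
    density [g] of [mu], [mu A = \int_0^oo nu (A `&` {g > t}) dt].  Always
    [nu (A `&` {g > t}) <= min (nu {g > t}) (nu A) = min (nu Omega - F_mu t) (nu A)],
    with equality when [A] and [{g > t}] are nested.  Hence [v_mu A] bounds
    [mu' A] for every [mu'] with [F_mu' = F_mu], and equals [mu A] for the sets
    [A = {f > z}], which comonotonicity nests with the [{g > t}].  Integrating
    over [z] gives both equalities. *)
From HB Require Import structures.
From mathcomp Require Import all_boot all_order all_algebra.
From mathcomp Require Import all_classical all_reals all_analysis.
Import Order.TTheory GRing.Theory Num.Theory.
Import measurable_realfun.
Local Open Scope classical_set_scope.
Local Open Scope ring_scope.

Lemma measurable_ge0 (R : realType) : measurable [set t : R | 0 <= t].
Proof. by rewrite -set_itvcy; exact: measurable_itv. Qed.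

Lemma measureI_le_min d (T : measurableType d) (R : realType)
    (m : {measure set T -> \bar R}) (A B : set T) :
  measurable A -> measurable B -> (m (A `&` B) <= Order.min (m A) (m B))%E.
Proof. by move=> mA mB; rewrite le_min measureIl ?measureIr. Qed.

Lemma measureI_chain d (T : measurableType d) (R : realType)
    (m : {measure set T -> \bar R}) (A B : set T) :
  measurable A -> measurable B -> A `<=` B \/ B `<=` A ->
  m (A `&` B) = Order.min (m A) (m B).
Proof.
move=> mA mB [AB|BA].
  by rewrite setIidl// min_l// le_measure ?inE.
by rewrite setIidr// min_r// le_measure ?inE.
Qed.

Lemma comonotone_superlevel (T : Type) (R : realType) (f g : T -> R) z t :
  comonotone f g ->
  [set x | z < f x] `<=` [set x | t < g x] \/
  [set x | t < g x] `<=` [set x | z < f x].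
Proof.
move=> fg.
have superlevelE (h : T -> R) s : [set x | s < h x] = ~` [set x | h x <= s].
  by apply/seteqP; split=> x /=; rewrite ltNge => /negP.
rewrite !superlevelE.
have [fg'|gf'] := fg [set x | f x <= z] [set x | g x <= t]
  (ex_intro _ z (or_introl erefl)) (ex_intro _ t (or_intror erefl)).
- by right; exact: subsetC.
- by left; exact: subsetC.
Qed.

Section superlevel_sets.
Context d (T : measurableType d) (R : realType) (h : T -> R).
Hypothesis mh : measurable_fun setT h.

Lemma measurable_superlevel t : measurable [set x | t < h x].
Proof.
rewrite (_ : [set x | t < h x] = setT `&` h @^-1` `]t, +oo[%classic).
  exact: mh.
by apply/seteqP; split=> x /=; rewrite in_itv/= andbT // => -[].
Qed.

Lemma measurable_sublevel t : measurable [set x | h x <= t].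
Proof.
rewrite (_ : [set x | h x <= t] = setT `&` h @^-1` `]-oo, t]%classic).
  exact: mh.
by apply/seteqP; split=> x /=; rewrite in_itv// => -[].
Qed.

Lemma measure_superlevel (m : {finite_measure set T -> \bar R}) t :
  m [set x | t < h x] = (m setT - Fdist m h t)%E.
Proof.
rewrite /Fdist -[in RHS](setTI [set x | h x <= t]) -measureD//; last first.
- by rewrite ltey_eq fin_num_measure.
- exact: measurable_sublevel.
congr (m _); apply/seteqP; split=> x /=.
  by move=> tx; split=> //; apply/negP; rewrite -ltNge.
by case=> _ /negP; rewrite -ltNge.
Qed.

End superlevel_sets.

Section layer_cake.
Local Open Scope ereal_scope.
Context d (T : measurableType d) (R : realType).
Variables (m : {sigma_finite_measure set T -> \bar R}) (h : T -> R).
Hypotheses (mh : measurable_fun setT h) (h0 : forall x, (0 <= h x)%R).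

(* Tonelli on the region under the graph of [h]: its fibre over [x] has length
   [h x], its section at height [t >= 0] is [{h > t}]. *)
Let subgraph := [set p : T * R | (0 <= p.2)%R /\ (p.2 < h p.1)%R].

Let measurable_subgraph : measurable subgraph.
Proof.
rewrite (_ : subgraph =
    setT `&` (fun p : T * R => (0 <= p.2)%R && (p.2 < h p.1)%R) @^-1` [set true]).
  apply: measurable_and => //.
    by apply: measurable_fun_ler => //; exact: measurable_snd.
  by apply: measurable_fun_ltr; [exact: measurable_snd | exact: measurableT_comp].
by apply/seteqP; split=> p /=; [case=> -> -> | case=> _ /andP].
Qed.

Let subgraph_fiber x :
  \int[lebesgue_measure]_t (EFin \o \1_subgraph) (x, t) = (h x)%:E.
Proof.
transitivity (\int[lebesgue_measure]_t (\1_(`[0%R, h x[%classic) t)%:E).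
  apply: eq_integral => t _; rewrite /= !indicE.
  rewrite (_ : ((x, t) \in subgraph) = (t \in `[0%R, h x[%classic))//.
  by apply/idP/idP; rewrite !inE /= in_itv/=; [case=> -> -> | move/andP].
rewrite integral_indic// setIT.
have /= -> := lebesgue_measure_itv `[0%R, h x[; rewrite lte_fin.
have [hx|] := ltP 0%R (h x); first by rewrite oppr0 adde0.
by rewrite le_eqVlt ltNge h0 orbF => /eqP ->.
Qed.

Let subgraph_section t :
  fubini_G m (EFin \o \1_subgraph) t =
  if (0 <= t)%R then m [set x | (t < h x)%R] else 0.
Proof.
rewrite /fubini_G; case: ifPn => t0.
  transitivity (\int[m]_x (\1_[set x | (t < h x)%R] x)%:E); last first.
    by rewrite integral_indic ?setIT//; exact: measurable_superlevel.
  apply: eq_integral => x _; rewrite /= !indicE.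
  rewrite (_ : ((x, t) \in subgraph) = (x \in [set x | (t < h x)%R]))//.
  by apply/idP/idP; rewrite !inE /subgraph /=; [case | move=> ?; split].
rewrite -(integral0 m setT); apply: eq_integral => x _.
by rewrite /= indicE memNset //= /subgraph /=; case=> /[swap] _; apply/negP.
Qed.

Lemma measurable_measure_superlevel :
  measurable_fun [set t : R | (0 <= t)%R] (fun t => m [set x | (t < h x)%R]).
Proof.
apply: (eq_measurable_fun (fubini_G m (EFin \o \1_subgraph))).
  by move=> t; rewrite inE /= => t0; rewrite subgraph_section t0.
exact: measurable_funS (indic_measurable_fun_fubini_tonelli_G m measurable_subgraph).
Qed.

Lemma layer_cake : \int[m]_x (h x)%:E =
  \int[lebesgue_measure]_(t in [set t : R | (0 <= t)%R]) m [set x | (t < h x)%R].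
Proof.
transitivity (\int[m]_x \int[lebesgue_measure]_t (EFin \o \1_subgraph) (x, t)).
  by apply: eq_integral => x _; rewrite subgraph_fiber.
rewrite fubini_tonelli; first last.
- by move=> p; rewrite lee_fin.
- by apply/measurable_EFinP; exact: measurable_indic.
rewrite [RHS]integral_mkcond; apply: eq_integral => t _.
rewrite patchE -/(fubini_G m (EFin \o \1_subgraph) t) subgraph_section.
have [t0|t0] := boolP (0 <= t)%R; first by rewrite mem_set.
by rewrite memNset//; exact/negP.
Qed.

End layer_cake.

Section layer_cake_in.
Local Open Scope ereal_scope.
Context d (T : measurableType d) (R : realType).
Variables (m : {sigma_finite_measure set T -> \bar R}) (g : T -> R) (A : set T).
Hypotheses (mg : measurable_fun setT g) (g0 : forall x, (0 <= g x)%R).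
Hypothesis mA : measurable A.

Let gA x := (g x * \1_A x)%R.

Let measurable_gA : measurable_fun setT gA.
Proof. by apply: measurable_funM => //; exact: measurable_indic. Qed.

Let gA_ge0 x : (0 <= gA x)%R.
Proof. by rewrite /gA indicE mulr_ge0. Qed.

Let superlevel_gA t : (0 <= t)%R ->
  [set x | (t < gA x)%R] = A `&` [set x | (t < g x)%R].
Proof.
move=> t0; apply/seteqP; split=> x /=; rewrite /gA indicE.
  case: (boolP (x \in A)) => xA; rewrite ?mulr1 ?mulr0.
    by move=> tx; split=> //; rewrite -inE.
  by move=> /(le_lt_trans t0); rewrite ltxx.
by case=> xA; rewrite mem_set// mulr1.
Qed.

Lemma layer_cake_in : \int[m]_(x in A) (g x)%:E =
  \int[lebesgue_measure]_(t in [set t : R | (0 <= t)%R])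
    m (A `&` [set x | (t < g x)%R]).
Proof.
transitivity (\int[m]_x (gA x)%:E).
  rewrite integral_mkcond; apply: eq_integral => x _.
  by rewrite patchE /gA indicE; case: ifPn; rewrite ?mulr1 ?mulr0.
rewrite layer_cake//; apply: eq_integral => t; rewrite inE => t0.
by rewrite superlevel_gA.
Qed.

Lemma measurable_measure_superlevelI : measurable_fun [set t : R | (0 <= t)%R]
  (fun t => m (A `&` [set x | (t < g x)%R])).
Proof.
apply: (eq_measurable_fun (fun t : R => m [set x | (t < gA x)%R])).
  by move=> t; rewrite inE => t0; rewrite superlevel_gA.
exact: measurable_measure_superlevel.
Qed.

End layer_cake_in.

Section vmu_set.
Local Open Scope ereal_scope.
Context d (T : measurableType d) (R : realType).
Variables (nu : {finite_measure set T -> \bar R}) (g : T -> R).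
Hypotheses (mg : measurable_fun setT g) (g0 : forall x, (0 <= g x)%R).

Lemma le_vmu_set (g' : T -> R) (A : set T) :
  measurable_fun setT g' -> (forall x, (0 <= g' x)%R) ->
  (forall t, (0 <= t)%R -> Fdist nu g' t = Fdist nu g t) -> measurable A ->
  \int[nu]_(x in A) (g' x)%:E <= vmu_set nu g A.
Proof.
move=> mg' g'0 Fg' mA; rewrite layer_cake_in//; apply: ge0_le_integral.
- exact: measurable_ge0.
- by move=> t _; exact: measure_ge0.
- exact: measurable_measure_superlevelI.
- apply: (eq_measurable_fun
      (fun t : R => Order.min (nu [set x | (t < g x)%R]) (nu A))).
    by move=> t _; rewrite measure_superlevel.
  by apply: measurable_mine => //; exact: measurable_measure_superlevel.
- move=> t t0; rewrite -Fg'// -measure_superlevel// setIC.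
  by apply: measureI_le_min => //; exact: measurable_superlevel.
Qed.

Lemma vmu_set_chain (A : set T) : measurable A ->
  (forall t, (0 <= t)%R ->
     A `<=` [set x | (t < g x)%R] \/ [set x | (t < g x)%R] `<=` A) ->
  \int[nu]_(x in A) (g x)%:E = vmu_set nu g A.
Proof.
move=> mA Ag; rewrite layer_cake_in//; apply: eq_integral => t; rewrite inE => t0.
rewrite measureI_chain//; first by rewrite -measure_superlevel// minC.
- exact: measurable_superlevel.
- exact: Ag.
Qed.

End vmu_set.

Theorem theorem14 (d : measure_display) (T : measurableType d) (R : realType)
  (nu : {finite_measure set T -> \bar R})
  (mu : {finite_measure set T -> \bar R})
  (g : T -> R) :
  @Sigma_class d T !=set0 ->
  mu `<< nu ->
  is_density mu nu g ->
  @Sigma_class d T (Iclass g) ->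
  (forall A, measurable A -> exists2 y : R, 0 <= y & nu A = Fdist nu g y) ->
  forall f : T -> R, measurable_fun setT f -> (forall x, 0 <= f x) ->
  comonotone f g ->
  vmu_fun nu g f = (\int[mu]_x (f x)%:E)%E /\
  (\int[mu]_x (f x)%:E)%E =
    ereal_sup [set (\int[mu']_x (f x)%:E)%E |
               mu' in [set mu' : {finite_measure set T -> \bar R} |
                       mu' `<< nu /\
                       exists g' : T -> R, is_density mu' nu g' /\
                         forall y : R, 0 <= y -> Fdist nu g' y = Fdist nu g y]].
Proof.
move=> _ mu_nu [mg [g0 mu_g]] _ _ f mf f0 fg.
have mu_vmu z : mu [set x | z < f x] = vmu_set nu g [set x | z < f x].
  rewrite mu_g; last exact: measurable_superlevel.
  apply: vmu_set_chain => //; first exact: measurable_superlevel.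
  by move=> t _; exact: comonotone_superlevel.
split.
  by rewrite layer_cake//; apply: eq_integral => z _; exact/esym/mu_vmu.
apply/eqP; rewrite eq_le; apply/andP; split.
  by apply: ereal_sup_ubound; exists mu => //; split=> //; exists g.
apply: ge_ereal_sup => _ [mu' [_ [g' [[mg' [g'0 mu'_g']] Fg']]] <-].
have mu'_le_mu z : (mu' [set x | (z < f x)%R] <= mu [set x | (z < f x)%R])%E.
  rewrite mu_vmu mu'_g'; last exact: measurable_superlevel.
  by apply: le_vmu_set => //; exact: measurable_superlevel.
rewrite !layer_cake//; apply: ge0_le_integral.
- exact: measurable_ge0.
- by move=> z _; exact: measure_ge0.
- exact: measurable_measure_superlevel.
- exact: measurable_measure_superlevel.
- by move=> z _; exact: mu'_le_mu.
Qed.
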